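(* Let $n\geq 1$, $B^n:=\{(x_1,\dots,x_n)\in\mathbb{R}^n: 1\geq x_1\geq\dots\geq x_n\geq 0\}$ and let $T\colon B^n\to B^n$ be the subtractive Selmer map defined below. For $j\in\{0,\dots,n\}$ put $B(j):=\{x\in B^n: i(1,x_1,\dots,x_n)=j\}$. Then the sets $B(0),\dots,B(n)$ form a partition of $B^n$ and the restriction of $T$ to each $B(j)$ is injective; hence $(B^n,T)$ is a fibred system with digit set $\{0,\dots,n\}$.
   Context: Let $\Delta^{n+1}:=\{b=(b_0,\dots,b_n): b_0\geq b_1\geq\dots\geq b_n\geq 0\}$. For $b\in\Delta^{n+1}$ let $i(b)$ be the smallest index $j\in\{0,\dots,n\}$ with $b_0-b_n\geq b_{j+1}$ (convention $b_{n+1}:=0$), and define $\pi\sigma b:=(b_1,\dots,b_{i},\,b_0-b_n,\,b_{i+1},\dots,b_n)$ with $i=i(b)$ (for $i=0$ this is $(b_0-b_n,b_1,\dots,b_n)$, for $i=n$ it is $(b_1,\dots,b_n,b_0-b_n)$); then $\pi\sigma b\in\Delta^{n+1}$. Let $p(b_0,\dots,b_n)=(b_1/b_0,\dots,b_n/b_0)$. The map $T$ is $T(x):=p(\pi\sigma(1,x_1,\dots,x_n))$. A fibred system is a pair $(B,T)$, $T\colon B\to B$, with a finite or countable digit set $I$ and a map $k\colon B\to I$ such that the sets $k^{-1}\{i\}$ partition $B$ and $T$ is injective on each of them. *)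

From HB Require Import structures.
From mathcomp Require Import all_boot all_order all_algebra.
From mathcomp Require Import reals.
Set Implicit Arguments. Unset Strict Implicit. Unset Printing Implicit Defensive.
Import Order.TTheory GRing.Theory Num.Theory.
Local Open Scope ring_scope.

(* Points of Delta^{n+1} are encoded as nat-indexed sequences b : nat -> R,
   of which only the entries b 0, ..., b n are relevant. *)

Definition inDelta (R : realType) (n : nat) (b : nat -> R) : Prop :=
  (forall k : nat, (k < n)%N -> b k.+1 <= b k) /\ 0 <= b n.

Definition bext (R : realType) (n : nat) (b : nat -> R) (k : nat) : R :=
  if (k <= n)%N then b k else 0.

(* i(b) : smallest j in {0,...,n} with b_0 - b_n >= b_{j+1}
   (returns n+1 if there is none, which never happens on Delta^{n+1}) *)
Definition idx (R : realType) (n : nat) (b : nat -> R) : nat :=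
  find (fun j => bext n b j.+1 <= b 0%N - b n) (iota 0 n.+1).

(* pi sigma b = (b_1,...,b_i, b_0 - b_n, b_{i+1},...,b_n) with i = i(b) *)
Definition pisigma (R : realType) (n : nat) (b : nat -> R) : nat -> R :=
  fun k => let i := idx n b in
    if (k < i)%N then b k.+1 else if k == i then b 0%N - b n else b k.

(* (1, x_1, ..., x_n) for x in R^n (x_{k+1} is x ord0 k) *)
Definition ext (R : realType) (n : nat) (x : 'rV[R]_n) : nat -> R :=
  fun k => if k == 0%N then 1 else
    match (insub k.-1 : option 'I_n) with Some i => x ord0 i | None => 0 end.

Definition inB (R : realType) (n : nat) (x : 'rV[R]_n) : Prop :=
  inDelta n (ext x).

(* p(b_0,...,b_n) = (b_1/b_0, ..., b_n/b_0); T(x) = p(pi sigma (1,x)) *)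
Definition Tsel (R : realType) (n : nat) (x : 'rV[R]_n) : 'rV[R]_n :=
  \row_(k < n) (pisigma n (ext x) k.+1 / pisigma n (ext x) 0%N).

Definition digit (R : realType) (n : nat) (x : 'rV[R]_n) : nat := idx n (ext x).

Definition Bj (R : realType) (n : nat) (j : nat) : 'rV[R]_n -> Prop :=
  fun x => inB x /\ digit x = j.

Definition fibred_system (X I : Type) (B : X -> Prop) (T : X -> X)
  (D : I -> Prop) (k : X -> I) : Prop :=
  (forall x, B x -> B (T x)) /\
  (forall x, B x -> D (k x)) /\
  (forall i, D i -> forall x y, B x -> B y -> k x = i -> k y = i ->
     T x = T y -> x = y).

(* On Delta^{n+1}, pi sigma only moves the entries b_1, ..., b_i one slot down
   and inserts b_0 - b_n at slot i = i(b); it stays in Delta^{n+1} by the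
   minimality of i(b), and its first entry is positive when b_0 is.  Knowing
   the digit i, T(x) = T(y) says that pi sigma (1,y) = mu * pi sigma (1,x), so
   y_k = mu x_k for all k >= 1 and 1 - y_n = mu (1 - x_n); since also
   y_n = mu x_n, this forces mu = 1. *)
From HB Require Import structures.
From mathcomp Require Import all_boot all_order all_algebra.
From mathcomp Require Import reals ring lra zify.
Set Implicit Arguments. Unset Strict Implicit. Unset Printing Implicit Defensive.
Import Order.TTheory GRing.Theory Num.Theory.
Local Open Scope ring_scope.

Section SubtractiveStep.
Variables (R : realType) (n : nat).
Implicit Types b : nat -> R.

Lemma inDelta_antitone b : inDelta n b ->
  forall k m, (k <= m)%N -> (m <= n)%N -> b m <= b k.
Proof.
move=> [hd _] k m km mn; elim: m km mn => [|m IH] km mn.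
  by move: km; rewrite leqn0 => /eqP ->.
case: (ltngtP k m.+1) km => // [lt _|-> _] //.
exact: le_trans (hd m mn) (IH _ (ltnW mn)).
Qed.

Let idx_pred b : pred nat := fun j => bext n b j.+1 <= b 0%N - b n.

Lemma idx_leq b : inDelta n b -> (idx n b <= n)%N.
Proof.
move=> hb; have : (idx n b < size (iota 0 n.+1))%N.
  rewrite -has_find; apply/hasP; exists n; first by rewrite mem_iota add0n ltnSn.
  by rewrite /idx_pred /bext ltnn subr_ge0 (inDelta_antitone hb).
by rewrite size_iota.
Qed.

Lemma idx_holds b : inDelta n b -> bext n b (idx n b).+1 <= b 0%N - b n.
Proof.
move=> hb; have hi : (idx n b < n.+1)%N by rewrite ltnS idx_leq.
have := @nth_find _ 0%N (idx_pred b) (iota 0 n.+1).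
by rewrite nth_iota // add0n; apply; rewrite has_find size_iota.
Qed.

Lemma lt_before_idx b j : inDelta n b -> (j < idx n b)%N -> b 0%N - b n < b j.+1.
Proof.
move=> hb hj; have := @before_find _ 0%N (idx_pred b) (iota 0 n.+1) j hj.
have jn : (j < n)%N by have := idx_leq hb; lia.
rewrite nth_iota ?ltnS 1?ltnW // add0n /idx_pred /bext jn.
by rewrite leNgt => /negbFE.
Qed.

Lemma pisigma_lt b k : (k < idx n b)%N -> pisigma n b k = b k.+1.
Proof. by rewrite /pisigma => ->. Qed.

Lemma pisigma_idx b : pisigma n b (idx n b) = b 0%N - b n.
Proof. by rewrite /pisigma ltnn eqxx. Qed.

Lemma pisigma_gt b k : (idx n b < k)%N -> pisigma n b k = b k.
Proof. by rewrite /pisigma => h; rewrite ltnNge (ltnW h) /= gtn_eqF. Qed.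

Lemma pisigma_inDelta b : inDelta n b -> inDelta n (pisigma n b).
Proof.
move=> hb; have hi := idx_leq hb; have [hd _] := hb; split.
  move=> k kn; case: (ltngtP k.+1 (idx n b)) => h.
  - by rewrite !pisigma_lt ?hd //; lia.
  - case: (ltngtP k (idx n b)) => h'; first lia.
      by rewrite !pisigma_gt ?hd //; lia.
    have := idx_holds hb.
    by rewrite h' pisigma_idx pisigma_gt // /bext; have -> : ((idx n b).+1 <= n)%N by lia.
  - by rewrite h pisigma_idx pisigma_lt ?ltW ?lt_before_idx //; lia.
case: (ltngtP n (idx n b)) => h; first lia.
  by rewrite pisigma_gt //; case: hb.
have -> : pisigma n b n = pisigma n b (idx n b) by rewrite -h.
by rewrite pisigma_idx subr_ge0 (inDelta_antitone hb).
Qed.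

Lemma pisigma0_gt0 b : (1 <= n)%N -> inDelta n b -> 0 < b 0%N -> 0 < pisigma n b 0.
Proof.
move=> n1 hb b0; have [_ bn] := hb.
have bn1 : b n <= b 1%N by exact: inDelta_antitone.
have bn0 : b n <= b 0%N by exact: inDelta_antitone.
case: (posnP (idx n b)) => h; last first.
  by rewrite pisigma_lt //; have := lt_before_idx hb h; lra.
by have := idx_holds hb; rewrite -h pisigma_idx /bext h n1 => ?; lra.
Qed.

Lemma pisigma_proportional b b' mu : idx n b' = idx n b -> (idx n b <= n)%N ->
  (forall k, (k <= n)%N -> pisigma n b' k = mu * pisigma n b k) ->
  (forall k, (1 <= k <= n)%N -> b' k = mu * b k) /\
  b' 0%N - b' n = mu * (b 0%N - b n).
Proof.
move=> hi hin hp; split; last by have := hp _ hin; rewrite -{1}hi !pisigma_idx.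
move=> k /andP[k1 kn]; case: (leqP k (idx n b)) => h.
  have := hp k.-1 ltac:(lia).
  by rewrite !pisigma_lt ?hi ?prednK //; lia.
by have := hp k kn; rewrite !pisigma_gt ?hi.
Qed.

Lemma ext_Tsel (x : 'rV[R]_n) k : pisigma n (ext x) 0 != 0 -> (k <= n)%N ->
  ext (Tsel x) k = pisigma n (ext x) k / pisigma n (ext x) 0.
Proof.
move=> h0; case: k => [|k] hk; first by rewrite divff.
by rewrite /ext /= insubT /Tsel mxE.
Qed.

Hypothesis n_gt0 : (1 <= n)%N.

Lemma pisigma_ext0_neq0 (x : 'rV[R]_n) : inB x -> pisigma n (ext x) 0 != 0.
Proof. by move=> hx; rewrite gt_eqF // pisigma0_gt0 ?ltr01. Qed.

Lemma Tsel_inB (x : 'rV[R]_n) : inB x -> inB (Tsel x).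
Proof.
move=> hx; have p0 := pisigma0_gt0 n_gt0 hx ltr01.
have p0' := pisigma_ext0_neq0 hx; have [hd hn] := pisigma_inDelta hx.
split; last by rewrite ext_Tsel // divr_ge0 // ltW.
move=> k kn; rewrite !ext_Tsel //; last by lia.
by rewrite ler_pM2r ?invr_gt0 // hd.
Qed.

Lemma Tsel_inj_digit (x y : 'rV[R]_n) : inB x -> inB y ->
  digit x = digit y -> Tsel x = Tsel y -> x = y.
Proof.
move=> hx hy hd hT.
have px := pisigma_ext0_neq0 hx; have py := pisigma_ext0_neq0 hy.
set mu := pisigma n (ext y) 0 / pisigma n (ext x) 0.
have hp k : (k <= n)%N -> pisigma n (ext y) k = mu * pisigma n (ext x) k.
  move=> kn; have := ext_Tsel px kn; rewrite hT (ext_Tsel py kn) => e.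
  by rewrite -[LHS](mulfVK py) e /mu; field.
have [hb he] := pisigma_proportional (esym hd) (idx_leq hx) hp.
have hn : ext y n = mu * ext x n by apply: hb; rewrite n_gt0 leqnn.
have mu1 : mu = 1 by move: he; rewrite hn /ext /= => he; lra.
apply/matrixP => i [j jn]; rewrite (ord1 i).
by have := hb j.+1 ltac:(lia); rewrite mu1 mul1r /ext /= insubT.
Qed.

End SubtractiveStep.

Theorem mainTheorem2 (R : realType) (n : nat) (hn : (1 <= n)%N) :
  (forall x : 'rV[R]_n, inB x -> exists j, (j <= n)%N /\ Bj j x) /\
  (forall (j1 j2 : nat) (x : 'rV[R]_n), Bj j1 x -> Bj j2 x -> j1 = j2) /\
  (forall j : nat, (j <= n)%N -> forall x y : 'rV[R]_n,
     Bj j x -> Bj j y -> Tsel x = Tsel y -> x = y) /\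
  fibred_system (@inB R n) (@Tsel R n) (fun j : nat => (j <= n)%N) (@digit R n).
Proof.
have inj_fibre j (x y : 'rV[R]_n) : inB x -> inB y -> digit x = j -> digit y = j ->
    Tsel x = Tsel y -> x = y.
  by move=> hx hy dx dy; apply: Tsel_inj_digit; rewrite ?dx ?dy.
split; first by move=> x hx; exists (digit x); split; first exact: idx_leq.
split; first by move=> j1 j2 x [_ <-] [_ <-].
split; first by move=> j _ x y [hx dx] [hy dy]; exact: inj_fibre dx dy.
split; first by move=> x; exact: Tsel_inB.
split; first by move=> x; exact: idx_leq.
by move=> j _; exact: inj_fibre.
Qed.
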